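(* For all integers $a,b,c,d\in\mathbb Z$, if $a+b=c+d$ then $(\mathbb Z,+)\models a:b::c:d$.
   Context: $(\mathbb Z,+)$ is the structure with universe $\mathbb Z$ and one binary function symbol interpreted as addition. The analogical proportion relation: a c-formula is a conjunctive formula (built from atomic formulas using only $\wedge,\exists,\forall$; parameters from the universe allowed) with free variables exactly $x,y$ whose dependency graph (vertices: its variables; edge $\{w,z\}$ iff $w,z$ occur in a common atomic subformula) is connected. $\uparrow_{\mathfrak A}(a\to b)=\{\alpha:\mathfrak A\models\alpha(a,b)\}$, $\uparrow_{\mathfrak A}(a\to b:\cdot\, c\to d)=\uparrow_{\mathfrak A}(a\to b)\cap\uparrow_{\mathfrak A}(c\to d)$. A c-formula is trivial iff it is in $\uparrow_{\mathfrak A}(a\to b:\cdot\, c\to d)$ for all $a,b,c,d$; $\emptyset_{\mathfrak A}$ is the set of these. $\mathfrak A\models a\to b:\cdot\, c\to d$ iff either $\uparrow_{\mathfrak A}(a\to b)\cup\uparrow_{\mathfrak A}(c\to d)$ consists only of trivial formulas, or $\uparrow_{\mathfrak A}(a\to b:\cdot\, c\to d)$ contains a non-trivial formula and for every $d'$, $\emptyset_{\mathfrak A}\subsetneq\uparrow(a\to b:\cdot\, c\to d)\subseteq\uparrow(a\to b:\cdot\, c\to d')$ implies $\emptyset_{\mathfrak A}\subsetneq\uparrow(a\to b:\cdot\, c\to d')\subseteq\uparrow(a\to b:\cdot\, c\to d)$. $\mathfrak A\models a:b::c:d$ iff $\mathfrak A\models a\to b:\cdot\, c\to d$, $b\to a:\cdot\,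 d\to c$, $c\to d:\cdot\, a\to b$ and $d\to c:\cdot\, b\to a$. *)

From Stdlib Require Import ZArith List Relations.
Import ListNotations.

Set Implicit Arguments.

Section Language.
Variable A : Type.

Inductive term : Type :=
  | TVar : nat -> term
  | TPar : A -> term
  | TApp : term -> term -> term.

Inductive formula : Type :=
  | FEq  : term -> term -> formula
  | FAnd : formula -> formula -> formula
  | FEx  : nat -> formula -> formula
  | FAll : nat -> formula -> formula.

Fixpoint term_vars (t : term) : list nat :=
  match t with
  | TVar v => [v]
  | TPar _ => []
  | TApp t1 t2 => term_vars t1 ++ term_vars t2
  end.

Fixpoint vars (phi : formula) : list nat :=
  match phi with
  | FEq t1 t2 => term_vars t1 ++ term_vars t2
  | FAnd p q => vars p ++ vars q
  | FEx v p | FAll v p => v :: vars p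
  end.

Fixpoint free (phi : formula) (v : nat) : Prop :=
  match phi with
  | FEq t1 t2 => In v (term_vars t1 ++ term_vars t2)
  | FAnd p q => free p v \/ free q v
  | FEx w p | FAll w p => v <> w /\ free p v
  end.

Fixpoint atoms (phi : formula) : list (term * term) :=
  match phi with
  | FEq t1 t2 => [(t1, t2)]
  | FAnd p q => atoms p ++ atoms q
  | FEx _ p | FAll _ p => atoms p
  end.

Definition dep_edge (phi : formula) (w z : nat) : Prop :=
  exists at_, In at_ (atoms phi) /\
    In w (term_vars (fst at_) ++ term_vars (snd at_)) /\
    In z (term_vars (fst at_) ++ term_vars (snd at_)).

Definition dep_connected (phi : formula) : Prop :=
  forall w z, In w (vars phi) -> In z (vars phi) ->
    clos_refl_trans nat (dep_edge phi) w z.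

Definition vx : nat := 0.
Definition vy : nat := 1.

Definition is_c (phi : formula) : Prop :=
  (forall v, free phi v <-> (v = vx \/ v = vy)) /\ dep_connected phi.

Variable f : A -> A -> A.

Fixpoint teval (rho : nat -> A) (t : term) : A :=
  match t with
  | TVar v => rho v
  | TPar c => c
  | TApp t1 t2 => f (teval rho t1) (teval rho t2)
  end.

Definition upd (rho : nat -> A) (v : nat) (a : A) : nat -> A :=
  fun n => if Nat.eqb n v then a else rho n.

Fixpoint sat (rho : nat -> A) (phi : formula) : Prop :=
  match phi with
  | FEq t1 t2 => teval rho t1 = teval rho t2
  | FAnd p q => sat rho p /\ sat rho q
  | FEx v p => exists a, sat (upd rho v a) p
  | FAll v p => forall a, sat (upd rho v a) p
  end.

(* Environment x := a, y := b (other variables irrelevant for c-formulas). *)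
Definition env2 (a b : A) : nat -> A :=
  fun n => match n with 0 => a | 1 => b | _ => a end.

Definition up (a b : A) (phi : formula) : Prop :=
  is_c phi /\ sat (env2 a b) phi.

Definition up4 (a b c d : A) (phi : formula) : Prop :=
  up a b phi /\ up c d phi.

Definition trivial (phi : formula) : Prop :=
  is_c phi /\ forall a b c d, up4 a b c d phi.

Definition subset (P Q : formula -> Prop) : Prop := forall phi, P phi -> Q phi.
Definition ssubset (P Q : formula -> Prop) : Prop :=
  subset P Q /\ exists phi, Q phi /\ ~ P phi.

Definition arrow_prop (a b c d : A) : Prop :=
  (forall phi, up a b phi \/ up c d phi -> trivial phi)
  \/
  ((exists phi, up4 a b c d phi /\ ~ trivial phi) /\
   forall d' : A,
     ssubset trivial (up4 a b c d) /\ subset (up4 a b c d) (up4 a b c d') ->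
     ssubset trivial (up4 a b c d') /\ subset (up4 a b c d') (up4 a b c d)).

Definition analogy (a b c d : A) : Prop :=
  arrow_prop a b c d /\ arrow_prop b a d c /\
  arrow_prop c d a b /\ arrow_prop d c b a.

End Language.

(* For a + b = c + d, the c-formula "x + y = a + b" lies in both
   ↑(a → b) and ↑(c → d) and is satisfied by no other pair (c, d'); hence it
   pins d down among all candidates d', which is exactly what the maximality
   condition of the analogical proportion asks for. The four proportions
   needed for a : b :: c : d all reduce to the same sum condition. *)
From Stdlib Require Import ZArith Lia Relations.

Section Determining.
Variables (A : Type) (f : A -> A -> A).

Lemma arrow_prop_of_determining (a b c d : A) (phi : formula A) :
  up4 f a b c d phi -> ~ trivial f phi ->
  (forall d', up f c d' phi -> d' = d) ->
  arrow_prop f a b c d.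
Proof.
  intros Hphi Hnontriv Hdet. right. split.
  - exists phi. split; assumption.
  - intros d' [Hssub Hsub].
    assert (d' = d) by (apply Hdet, (Hsub phi Hphi)).
    subst d'. split; [exact Hssub | intros psi Hpsi; exact Hpsi].
Qed.

End Determining.

Definition sum_formula (k : Z) : formula Z :=
  FEq (TApp (TVar Z vx) (TVar Z vy)) (TPar k).

Lemma sum_formula_is_c k : is_c (sum_formula k).
Proof.
  split.
  - intro v; simpl; unfold vx, vy; intuition.
  - intros w z Hw Hz. apply rt_step.
    exists (TApp (TVar Z vx) (TVar Z vy), TPar k).
    simpl in *. intuition.
Qed.

Lemma up_sum_formula a b k : up Z.add a b (sum_formula k) <-> (a + b = k)%Z.
Proof.
  split.
  - intros [_ H]. exact H.
  - intros H. split; [apply sum_formula_is_c | exact H].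
Qed.

Lemma sum_formula_nontrivial k : ~ trivial Z.add (sum_formula k).
Proof.
  intros [_ Htriv]. destruct (Htriv (k + 1)%Z 0%Z 0%Z 0%Z) as [Hup _].
  apply up_sum_formula in Hup. lia.
Qed.

Lemma arrow_prop_add_of_sum_eq a b c d :
  (a + b = c + d)%Z -> arrow_prop Z.add a b c d.
Proof.
  intros E. apply arrow_prop_of_determining with (phi := sum_formula (a + b)).
  - split; apply up_sum_formula; lia.
  - apply sum_formula_nontrivial.
  - intros d' Hd'. apply up_sum_formula in Hd'. lia.
Qed.

Theorem corollary12 : forall a b c d : Z,
  (a + b = c + d)%Z -> analogy Z.add a b c d.
Proof.
  intros a b c d E.
  repeat split; apply arrow_prop_add_of_sum_eq; lia.
Qed.
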